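(* Let $K\subset\mathbb R^m$ be a smooth cone, $A:\mathbb R^n\to\mathbb R^m$ linear, $b\in\mathbb R^m$, with $S=\{x: Ax+b\in K\}\neq\emptyset$, and assume $\{0\}\neq\operatorname{Im}A\cap K\subset\operatorname{bd}K$. Then: (i) if $\dim(\operatorname{Im}A)\neq1$ and $b\in\operatorname{Im}A$, then $\mathrm{ACQ}(S)$ does not hold and the inclusion $Ax+b\in K$ has no global error bound; (ii) if $\dim(\operatorname{Im}A)\neq1$ and $b\notin\operatorname{Im}A$, then $\mathrm{ACQ}(S)$ holds but the inclusion has no global error bound; (iii) if $\dim(\operatorname{Im}A)=1$, then the inclusion has a global error bound.
   Context: $\mathrm{ACQ}(S)$ means $A^*[N_K(Ax+b)]=N_S(x)$ for all $x\in S$, where $A^*$ is the adjoint and $N_D(x)$ the normal cone of a convex set. A global error bound means there is $\alpha>0$ with $d(x,S)\le\alpha\,d(Ax+b,K)$ for all $x\in\mathbb R^n$, $d(x,D)=\inf_{y\in D}\|x-y\|$. A cone is regular if pointed, closed, convex, with nonempty interior. A regular cone $C$ is smooth if every boundary point lies on an extreme ray of $C$ (a ray $\{\lambda x:\lambda\ge0\}$, $x\ne0$, which is a face of $C$) and, for every non-zero point $x$ of any extreme ray, $N_C(x)$ has dimension one. *)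

From HB Require Import structures.
From mathcomp Require Import all_boot all_order all_algebra.
From mathcomp Require Import classical_sets reals.
Set Implicit Arguments. Unset Strict Implicit. Unset Printing Implicit Defensive.
Import Order.TTheory GRing.Theory Num.Theory.
Local Open Scope ring_scope.
Local Open Scope classical_set_scope.

Section Defs.
Variable R : realType.

Definition dot n (u v : 'cV[R]_n) : R := \sum_(i < n) u i 0 * v i 0.
Definition enorm n (u : 'cV[R]_n) : R := Num.sqrt (dot u u).

Definition dist n (x : 'cV[R]_n) (D : set 'cV[R]_n) : R :=
  inf [set enorm (x - y) | y in D].

Definition convex_set n (C : set 'cV[R]_n) : Prop :=
  forall x y t, C x -> C y -> 0 <= t -> t <= 1 -> C (t *: x + (1 - t) *: y).

Definition is_cone n (C : set 'cV[R]_n) : Prop :=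
  forall x t, C x -> 0 <= t -> C (t *: x).

Definition pointed n (C : set 'cV[R]_n) : Prop :=
  forall x, C x -> C (- x) -> x = 0.

Definition closure_pt n (C : set 'cV[R]_n) (x : 'cV[R]_n) : Prop :=
  forall e : R, 0 < e -> exists2 y, C y & enorm (x - y) < e.

Definition closed_set n (C : set 'cV[R]_n) : Prop :=
  forall x, closure_pt C x -> C x.

Definition interior_pt n (C : set 'cV[R]_n) (x : 'cV[R]_n) : Prop :=
  exists2 e : R, 0 < e & forall y, enorm (y - x) < e -> C y.

Definition boundary n (C : set 'cV[R]_n) : set 'cV[R]_n :=
  [set x | closure_pt C x /\ ~ interior_pt C x].

Definition regular_cone n (C : set 'cV[R]_n) : Prop :=
  [/\ is_cone C, pointed C, closed_set C, convex_set C &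
      exists x, interior_pt C x].

(* normal cone of a convex set D at x (empty if x is not in D) *)
Definition normal_cone n (D : set 'cV[R]_n) (x : 'cV[R]_n) : set 'cV[R]_n :=
  [set v | D x /\ forall y, D y -> dot v (y - x) <= 0].

Definition face n (C F : set 'cV[R]_n) : Prop :=
  [/\ F `<=` C, convex_set F &
      forall x y t, C x -> C y -> 0 < t -> t < 1 ->
        F (t *: x + (1 - t) *: y) -> F x /\ F y].

Definition ray n (d : 'cV[R]_n) : set 'cV[R]_n :=
  [set l *: d | l in [set l : R | 0 <= l]].

Definition extreme_ray n (C : set 'cV[R]_n) (d : 'cV[R]_n) : Prop :=
  d != 0 /\ face C (ray d).

Definition dim_one n (N : set 'cV[R]_n) : Prop :=
  (exists2 w, N w & w != 0) /\
  exists2 v, v != 0 & N `<=` [set t *: v | t in [set: R]].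

Definition smooth_cone n (C : set 'cV[R]_n) : Prop :=
  [/\ regular_cone C,
      (forall x, boundary C x -> exists2 d, extreme_ray C d & ray d x) &
      (forall d x, extreme_ray C d -> ray d x -> x != 0 ->
         dim_one (normal_cone C x))].

Definition feas m n (A : 'M[R]_(m, n)) (b : 'cV[R]_m) (K : set 'cV[R]_m)
  : set 'cV[R]_n := [set x | K (A *m x + b)].

Definition ACQ m n (A : 'M[R]_(m, n)) (b : 'cV[R]_m) (K : set 'cV[R]_m) : Prop :=
  forall x, feas A b K x ->
    [set A^T *m v | v in normal_cone K (A *m x + b)] = normal_cone (feas A b K) x.

Definition global_error_bound m n (A : 'M[R]_(m, n)) (b : 'cV[R]_m)
  (K : set 'cV[R]_m) : Prop :=
  exists2 alpha : R, 0 < alpha &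
    forall x, dist x (feas A b K) <= alpha * dist (A *m x + b) K.

Definition imA m n (A : 'M[R]_(m, n)) : set 'cV[R]_m := [set A *m x | x in [set: 'cV[R]_n]].

End Defs.

(* Let [d] span [Im A ∩ K]: since [Im A ∩ K] lies in the boundary of the smooth
   cone [K], any two of its points lie on a common extreme ray, so [Im A ∩ K] is
   the ray of [d], and the normal cone [N_K(d)] is a half-line.
   If [rank A >= 2], pick [w ≠ 0] in [Im A] orthogonal to [d]. An error bound
   would keep all points [t d ± w] (t >= 0) at distance >= c > 0 from [K], as
   feasible points can be blown up along them. Separating these points from [K]
   and letting [t -> oo] gives unit normals [u±] in [N_K(d)] with
   [±<u±, w> >= c], impossible on a half-line. Similarly, when [b ∈ Im A], ACQ at
   the point with [A x + b = 0] would write [±A^T w] as [A^T u±] with [u±] in the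
   half-line [N_K(d)]. When [b ∉ Im A], the same face argument produces a Slater
   point, and Slater's condition gives ACQ via closedness of [A^T N_K(Ax+b)],
   separation and the bipolar theorem.
   In rank one, [A x = phi(x) d] and [S] is a half-space [phi >= t1]; a normal of
   [K] at [b + t1 d] that is strictly negative on [d] makes the residual grow
   linearly with [t1 - phi(x)], which is proportional to the distance to [S]. *)

From mathcomp Require Import all_boot all_order all_algebra.
From mathcomp Require Import boolp classical_sets reals topology normedtype derive.
From mathcomp Require Import ring lra.
Set Implicit Arguments. Unset Strict Implicit. Unset Printing Implicit Defensive.
Import Order.TTheory GRing.Theory Num.Theory numFieldNormedType.Exports.
Local Open Scope ring_scope.
Local Open Scope classical_set_scope.

Section Euclidean.
Variable R : realType.
Implicit Types k : nat.

Lemma dotE k (u v : 'cV[R]_k) : dot u v = (u^T *m v) 0 0.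
Proof. by rewrite /dot mxE; apply: eq_bigr => i _; rewrite mxE. Qed.

Lemma dotC k (u v : 'cV[R]_k) : dot u v = dot v u.
Proof. by rewrite /dot; apply: eq_bigr => i _; rewrite mulrC. Qed.

Lemma dotDl k (u v w : 'cV[R]_k) : dot (u + v) w = dot u w + dot v w.
Proof. by rewrite /dot -big_split /=; apply: eq_bigr => i _; rewrite mxE mulrDl. Qed.

Lemma dotZl k a (u w : 'cV[R]_k) : dot (a *: u) w = a * dot u w.
Proof. by rewrite /dot mulr_sumr; apply: eq_bigr => i _; rewrite mxE mulrA. Qed.

Lemma dotNl k (u w : 'cV[R]_k) : dot (- u) w = - dot u w.
Proof. by rewrite -scaleN1r dotZl mulN1r. Qed.

Lemma dotBl k (u v w : 'cV[R]_k) : dot (u - v) w = dot u w - dot v w.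
Proof. by rewrite dotDl dotNl. Qed.

Lemma dotDr k (u v w : 'cV[R]_k) : dot w (u + v) = dot w u + dot w v.
Proof. by rewrite dotC dotDl !(dotC w). Qed.

Lemma dotZr k a (u w : 'cV[R]_k) : dot w (a *: u) = a * dot w u.
Proof. by rewrite dotC dotZl dotC. Qed.

Lemma dotNr k (u w : 'cV[R]_k) : dot w (- u) = - dot w u.
Proof. by rewrite dotC dotNl dotC. Qed.

Lemma dotBr k (u v w : 'cV[R]_k) : dot w (u - v) = dot w u - dot w v.
Proof. by rewrite dotDr dotNr. Qed.

Lemma dot0l k (w : 'cV[R]_k) : dot 0 w = 0.
Proof. by rewrite -(scale0r 0) dotZl mul0r. Qed.

Lemma dot0r k (w : 'cV[R]_k) : dot w 0 = 0.
Proof. by rewrite dotC dot0l. Qed.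

Lemma dotmm_ge0 k (u : 'cV[R]_k) : 0 <= dot u u.
Proof. by apply: sumr_ge0 => i _; rewrite -expr2 sqr_ge0. Qed.

Lemma dotmm_eq0 k (u : 'cV[R]_k) : dot u u = 0 -> u = 0.
Proof.
move=> h; apply/matrixP => i j; rewrite (ord1 j) mxE.
have sq_ge0 l : xpredT l -> 0 <= u l 0 * u l 0 by rewrite -expr2 sqr_ge0.
have /eqP := @psumr_eq0P R _ xpredT (fun l => u l 0 * u l 0) sq_ge0 h i isT.
by rewrite mulf_eq0 orbb => /eqP.
Qed.

Lemma dot_trmx_mul m1 n1 (A : 'M[R]_(m1, n1)) v x :
  dot (A^T *m v) x = dot v (A *m x).
Proof. by rewrite !dotE trmx_mul trmxK mulmxA. Qed.

Lemma dotBmZ k (u v : 'cV[R]_k) (t : R) :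
  dot (u - t *: v) (u - t *: v) = dot u u - 2 * t * dot u v + t ^+ 2 * dot v v.
Proof. rewrite !(dotBl, dotBr, dotZl, dotZr) (dotC v u); ring. Qed.

Lemma enorm_ge0 k (u : 'cV[R]_k) : 0 <= enorm u.
Proof. exact: sqrtr_ge0. Qed.

Lemma enorm_sqr k (u : 'cV[R]_k) : enorm u ^+ 2 = dot u u.
Proof. by rewrite /enorm sqr_sqrtr // dotmm_ge0. Qed.

Lemma enorm_eq0 k (u : 'cV[R]_k) : enorm u = 0 -> u = 0.
Proof. by move=> h; apply: dotmm_eq0; rewrite -enorm_sqr h expr0n. Qed.

Lemma enorm_gt0 k (u : 'cV[R]_k) : u != 0 -> 0 < enorm u.
Proof.
move=> u0; rewrite lt_neqAle enorm_ge0 andbT eq_sym.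
by apply: contra u0 => /eqP /enorm_eq0 ->.
Qed.

Lemma enorm0 k : enorm (0 : 'cV[R]_k) = 0.
Proof. by rewrite /enorm dot0l sqrtr0. Qed.

Lemma enormZ k a (u : 'cV[R]_k) : enorm (a *: u) = `|a| * enorm u.
Proof.
by rewrite /enorm dotZl dotZr mulrA -expr2 sqrtrM ?sqr_ge0 // sqrtr_sqr.
Qed.

Lemma enormN k (u : 'cV[R]_k) : enorm (- u) = enorm u.
Proof. by rewrite -scaleN1r enormZ normrN1 mul1r. Qed.

Lemma enorm_subC k (u v : 'cV[R]_k) : enorm (u - v) = enorm (v - u).
Proof. by rewrite -enormN opprB. Qed.

Lemma ler_of_sqr (a c : R) : 0 <= c -> a ^+ 2 <= c ^+ 2 -> a <= c.
Proof.
move=> c0 h; have [a0|a0] := lerP a 0; first exact: le_trans a0 c0.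
by rewrite -(ler_pXn2r (isT : (0 < 2)%N)) // ?nnegrE ltW.
Qed.

Lemma dot_le_enormM k (u v : 'cV[R]_k) : dot u v <= enorm u * enorm v.
Proof.
have [u0|nu] := eqVneq (enorm u) 0.
  by rewrite (enorm_eq0 u0) dot0l enorm0 mul0r.
have [v0|nv] := eqVneq (enorm v) 0.
  by rewrite (enorm_eq0 v0) dot0r enorm0 mulr0.
have pu : 0 < enorm u by rewrite lt_neqAle eq_sym nu enorm_ge0.
have pv : 0 < enorm v by rewrite lt_neqAle eq_sym nv enorm_ge0.
have h := dotmm_ge0 (enorm v *: u - enorm u *: v).
rewrite !(dotBl, dotBr, dotZl, dotZr) -!enorm_sqr (dotC v u) in h.
have p2 : 0 < 2 * (enorm u * enorm v) by rewrite !mulr_gt0.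
rewrite -(ler_pM2l p2); nra.
Qed.

Lemma normr_dot_le k (u v : 'cV[R]_k) : `|dot u v| <= enorm u * enorm v.
Proof.
by rewrite ler_norml dot_le_enormM andbT lerNl -dotNl -(enormN u) dot_le_enormM.
Qed.

Lemma ler_enormD k (u v : 'cV[R]_k) : enorm (u + v) <= enorm u + enorm v.
Proof.
apply: ler_of_sqr; first by rewrite addr_ge0 ?enorm_ge0.
rewrite enorm_sqr !(dotDl, dotDr) (dotC v u) sqrrD -!enorm_sqr.
have := dot_le_enormM u v; nra.
Qed.

Lemma ler_enorm_distD k (u v w : 'cV[R]_k) : enorm (u - w) <= enorm (u - v) + enorm (v - w).
Proof. by have := ler_enormD (u - v) (v - w); rewrite addrA subrK. Qed.

Lemma enorm_lipschitz k (w u v : 'cV[R]_k) :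
  `|enorm (u - w) - enorm (v - w)| <= 1 * enorm (u - v).
Proof.
rewrite mul1r ler_norml; have := ler_enorm_distD u v w.
have := ler_enorm_distD v u w; rewrite (enorm_subC v u); lra.
Qed.

Lemma dot_lipschitz k (w u v : 'cV[R]_k) : `|dot w u - dot w v| <= enorm w * enorm (u - v).
Proof. by rewrite -dotBr normr_dot_le. Qed.

Lemma ler_coord_enorm k (u : 'cV[R]_k) i : `|u i 0| <= enorm u.
Proof.
apply: ler_of_sqr; first exact: enorm_ge0.
rewrite enorm_sqr /dot (bigD1 i) //= real_normK ?num_real // lerDl.
by apply: sumr_ge0 => j _; rewrite -expr2 sqr_ge0.
Qed.

Lemma enorm_le_sum k (u : 'cV[R]_k) : enorm u <= \sum_i `|u i 0|.
Proof.
apply: ler_of_sqr; first exact: sumr_ge0.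
rewrite enorm_sqr /dot expr2 mulr_suml; apply: ler_sum => i _.
rewrite mulr_sumr (bigD1 i) //= -normrM -{1}[u i 0 * u i 0]ger0_norm.
  by rewrite ler_wpDr // ?sumr_ge0 // => j _; rewrite mulr_ge0.
by rewrite -expr2 sqr_ge0.
Qed.

Lemma enorm_mulmx_le m1 n1 (A : 'M[R]_(m1, n1)) :
  exists2 C, 0 < C & forall x, enorm (A *m x) <= C * enorm x.
Proof.
exists (1 + \sum_i \sum_j `|A i j|).
  by rewrite ltr_pwDl // sumr_ge0 // => i _; rewrite sumr_ge0.
move=> x; apply: le_trans (enorm_le_sum _) _.
apply: le_trans (_ : _ <= (\sum_i \sum_j `|A i j|) * enorm x) _; last first.
  by rewrite ler_wpM2r ?enorm_ge0 // lerDr.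
rewrite mulr_suml; apply: ler_sum => i _; rewrite mxE mulr_suml.
apply: le_trans (ler_norm_sum _ _ _) _; apply: ler_sum => j _.
by rewrite normrM ler_wpM2l // ler_coord_enorm.
Qed.

End Euclidean.
Section Compactness.
Variable R : realType.
Implicit Types k : nat.

Definition lipschitz k (f : 'cV[R]_k -> R) (L : R) :=
  forall x y, `|f x - f y| <= L * enorm (x - y).

Lemma ler_coord_mx_norm k (r : 'rV[R]_k) i : `|r 0 i| <= `|r|.
Proof.
rewrite [leRHS]/Num.Def.normr /= mx_normrE; apply/bigmax_geP; right => /=.
by exists (ord0, i).
Qed.

Lemma enorm_trmx_le k (r : 'rV[R]_k) : enorm r^T <= k%:R * `|r|.
Proof.
apply: le_trans (enorm_le_sum _) _.
have -> : k%:R * `|r| = \sum_(i < k) `|r| by rewrite sumr_const card_ord mulr_natl.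
by apply: ler_sum => i _; rewrite mxE ler_coord_mx_norm.
Qed.

Lemma mx_norm_le_enorm k (r : 'rV[R]_k) : `|r| <= enorm r^T.
Proof.
rewrite [leLHS]/Num.Def.normr /= mx_normrE; apply: bigmax_le; first exact: enorm_ge0.
move=> [i j] _ /=; rewrite (ord1 i).
by have := ler_coord_enorm (r^T) j; rewrite mxE.
Qed.

(* Compactness comes from the normed topology of row vectors, compared with
   [enorm] through the transpose. *)
Lemma compact_closed_bounded k (C : set 'cV[R]_k) (B : R) :
  closed_set C -> (forall x, C x -> enorm x <= B) ->
  compact [set r : 'rV[R]_k | C r^T].
Proof.
move=> clC bC; apply: bounded_closed_compact.
  exists B; split; first exact: num_real.
  move=> M BM x Cx; apply: le_trans (mx_norm_le_enorm x) _.
  exact: le_trans (bC _ Cx) (ltW BM).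
move=> r hr; apply: clC => e e0.
have kp : 0 < k%:R + 1 :> R by rewrite ltr_pwDr // ler0n.
have [|s [Cs]] := hr (ball r (e / (k%:R + 1))).
  by apply: nbhsx_ballx; rewrite divr_gt0.
rewrite -ball_normE /= => hs; exists s^T => //; rewrite -linearB /=.
apply: le_lt_trans (enorm_trmx_le _) _.
rewrite ltr_pdivlMr // mulrDr mulr1 in hs.
have : 0 <= `|r - s| by [].
rewrite [X in X < _]mulrC; lra.
Qed.

Lemma continuous_lipschitz k (f : 'cV[R]_k -> R) L : 0 <= L ->
  lipschitz f L -> continuous (fun r : 'rV[R]_k => f r^T).
Proof.
move=> L0 lipf r s /nbhs_ballP [e e0 es]; apply/nbhs_ballP.
have kp : 0 < L * k%:R + 1 by rewrite ltr_pwDr // mulr_ge0 // ler0n.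
exists (e / (L * k%:R + 1)); first by rewrite /= divr_gt0.
move=> r'; rewrite -!ball_normE /= => hr'; apply: es; rewrite -ball_normE /=.
rewrite ltr_pdivlMr // mulrDr mulr1 in hr'.
apply: le_lt_trans (lipf _ _) _; rewrite -linearB /=.
apply: le_lt_trans (_ : L * enorm (r - r')^T <= L * (k%:R * `|r - r'|)) _.
  by rewrite ler_wpM2l // enorm_trmx_le.
have : 0 <= `|r - r'| by [].
have : 0 <= L * k%:R * `|r - r'| by rewrite !mulr_ge0 // ler0n.
rewrite mulrA; lra.
Qed.

Lemma lipschitz_min_attained k (C : set 'cV[R]_k) (f : 'cV[R]_k -> R) (L B : R) :
  C !=set0 -> closed_set C -> (forall x, C x -> enorm x <= B) ->
  0 <= L -> lipschitz f L -> exists2 c, C c & forall x, C x -> f c <= f x.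
Proof.
move=> [c0 Cc0] clC bC L0 lipf.
have ne : [set r : 'rV[R]_k | C r^T] !=set0 by exists c0^T; rewrite /= trmxK.
have [c Cc hc] := compact_EVT_min ne (compact_closed_bounded clC bC)
  (continuous_subspaceT (continuous_lipschitz L0 lipf)).
exists c^T; first by rewrite inE in Cc.
by move=> x Cx; have := hc x^T; rewrite trmxK; apply; rewrite inE /= trmxK.
Qed.

Lemma closed_setI k (C D : set 'cV[R]_k) :
  closed_set C -> closed_set D -> closed_set (C `&` D).
Proof.
move=> cC cD x hx; split.
  by apply: cC => e e0; have [y [Cy _] h] := hx e e0; exists y.
by apply: cD => e e0; have [y [_ Dy] h] := hx e e0; exists y.
Qed.

Lemma closed_bigcap k (I : Type) (F : I -> set 'cV[R]_k) :
  (forall i, closed_set (F i)) -> closed_set [set x | forall i, F i x].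
Proof. by move=> cF x hx i; apply: cF => e e0; have [y Fy h] := hx e e0; exists y. Qed.

Lemma closed_sublevel k (f : 'cV[R]_k -> R) L c : 0 <= L ->
  lipschitz f L -> closed_set [set x | f x <= c].
Proof.
move=> L0 lipf x hx /=; rewrite leNgt; apply/negP => cx.
have e0 : 0 < (f x - c) / (L + 1) by rewrite divr_gt0 ?subr_gt0 // ltr_pwDr.
have [y /= fy hy] := hx _ e0.
have : enorm (x - y) * (L + 1) < f x - c by rewrite -ltr_pdivlMr // ltr_pwDr.
rewrite mulrDr mulr1 mulrC => {}hy.
have := lipf x y; rewrite ler_norml => /andP[_].
have := enorm_ge0 (x - y); lra.
Qed.

Lemma closed_ball k (c : 'cV[R]_k) r : closed_set [set x | enorm (x - c) <= r].
Proof. exact: (closed_sublevel ler01 (enorm_lipschitz c)). Qed.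

Lemma closed_superlevel k (f : 'cV[R]_k -> R) L c : 0 <= L ->
  lipschitz f L -> closed_set [set x | c <= f x].
Proof.
move=> L0 lipf; have lipNf : lipschitz (fun x => - f x) L.
  by move=> x y; rewrite -opprD normrN.
have -> : [set x | c <= f x] = [set x | - f x <= - c].
  by apply/seteqP; split => x /=; rewrite lerN2.
exact: closed_sublevel L0 lipNf.
Qed.

Definition polar k (C : set 'cV[R]_k) (u : 'cV[R]_k) := forall y, C y -> dot u y <= 0.

Lemma closed_polar k (C : set 'cV[R]_k) : closed_set (polar C).
Proof.
have -> : polar C = [set u | forall y : {y | C y}, dot u (sval y) <= 0].
  apply/seteqP; split => u /= h; first by move=> [y Cy]; apply: h.
  by move=> y Cy; apply: (h (exist _ y Cy)).
apply: closed_bigcap => y; apply: (closed_sublevel (enorm_ge0 (sval y))).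
by move=> u v; rewrite !(dotC _ (sval y)) dot_lipschitz.
Qed.

End Compactness.

Section Distance.
Variable R : realType.
Implicit Types k : nat.

Lemma dist_le k (D : set 'cV[R]_k) x y : D y -> dist x D <= enorm (x - y).
Proof.
move=> Dy; apply: ge_inf; last by exists y.
by exists 0 => _ [z _ <-]; exact: enorm_ge0.
Qed.

Lemma dist_ge k (D : set 'cV[R]_k) x c : D !=set0 ->
  (forall y, D y -> c <= enorm (x - y)) -> c <= dist x D.
Proof.
move=> [y Dy] h; apply: lb_le_inf; first by exists (enorm (x - y)), y.
by move=> _ [z Dz <-]; exact: h.
Qed.

Lemma dist_ge0 k (D : set 'cV[R]_k) x : D !=set0 -> 0 <= dist x D.
Proof. by move=> D0; apply: dist_ge => // y _; exact: enorm_ge0. Qed.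

Lemma dist_lt k (D : set 'cV[R]_k) x e : D !=set0 -> dist x D < e ->
  exists2 y, D y & enorm (x - y) < e.
Proof.
move=> [y0 Dy0] h; have [] := inf_lt _ h; first by exists (enorm (x - y0)), y0.
by move=> _ [y Dy <-] hy; exists y.
Qed.

Lemma dist_lipschitz k (D : set 'cV[R]_k) : D !=set0 -> lipschitz (fun x => dist x D) 1.
Proof.
have tri x z : D !=set0 -> dist x D <= enorm (x - z) + dist z D.
  move=> D0; rewrite -lerBlDl; apply: dist_ge => // y Dy; rewrite lerBlDl.
  exact: le_trans (dist_le x Dy) (ler_enorm_distD x z y).
move=> D0 x z; rewrite mul1r ler_norml.
have := tri x z D0; have := tri z x D0; rewrite enorm_subC; lra.
Qed.

Lemma dist0_closed k (D : set 'cV[R]_k) x :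
  D !=set0 -> closed_set D -> dist x D = 0 -> D x.
Proof. by move=> D0 cD dx0; apply: cD => e e0; apply: dist_lt; rewrite ?dx0. Qed.

Lemma exists_nearest k (D : set 'cV[R]_k) x : D !=set0 -> closed_set D ->
  exists2 p, D p & forall y, D y -> enorm (x - p) <= enorm (x - y).
Proof.
move=> [y0 Dy0] cD.
pose C := D `&` [set y | enorm (y - x) <= enorm (x - y0)].
have bC y : C y -> enorm y <= enorm x + enorm (x - y0).
  move=> [_ /= hy]; have := ler_enorm_distD y x 0; rewrite !subr0; lra.
have lip : lipschitz (fun y => enorm (x - y)) 1.
  by move=> y z; rewrite !(enorm_subC x) enorm_lipschitz.
have [||p [Dp hp] pmin] := lipschitz_min_attained _ _ bC ler01 lip.
- by exists y0; split; rewrite //= enorm_subC.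
- by apply: closed_setI => //; exact: closed_ball.
exists p => // y Dy; have [le|lt] := lerP (enorm (x - y)) (enorm (x - y0)).
  by apply: pmin; split; rewrite //= enorm_subC.
by rewrite /= enorm_subC in hp; apply: le_trans hp (ltW lt).
Qed.

Lemma dist_nearest k (D : set 'cV[R]_k) x p : D p ->
  (forall y, D y -> enorm (x - p) <= enorm (x - y)) -> dist x D = enorm (x - p).
Proof.
move=> Dp h; apply/eqP; rewrite eq_le dist_le //=.
by apply: dist_ge => //; exists p.
Qed.

Lemma nearest_convex k (D : set 'cV[R]_k) x p : convex_set D -> D p ->
  (forall y, D y -> enorm (x - p) <= enorm (x - y)) ->
  forall y, D y -> dot (x - p) (y - p) <= 0.
Proof.
move=> cD Dp hp y Dy; rewrite leNgt; apply/negP => apos.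
set a := dot (x - p) (y - p); set c := dot (y - p) (y - p).
have {}apos : 0 < a := apos.
have c0 : 0 <= c by exact: dotmm_ge0.
pose t := a / (a + c).
have ac : 0 < a + c by lra.
have t0 : 0 <= t by rewrite divr_ge0 // ltW.
have t1 : t <= 1 by rewrite /t ler_pdivrMr // mul1r; lra.
have := hp _ (cD y p t Dy Dp t0 t1).
have -> : x - (t *: y + (1 - t) *: p) = (x - p) - t *: (y - p).
  by rewrite scalerBl scale1r scalerBr; apply/matrixP => i j; rewrite !mxE; ring.
move=> h; have : enorm (x - p) ^+ 2 <= enorm (x - p - t *: (y - p)) ^+ 2.
  by rewrite lerXn2r ?nnegrE ?enorm_ge0.
rewrite !enorm_sqr dotBmZ -/a -/c => h2.
have tc : t * (a + c) = a by rewrite /t divfK ?gt_eqF.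
have : 2 * t * a <= t ^+ 2 * c by lra.
rewrite expr2; nra.
Qed.

Lemma nearest_cone k (C : set 'cV[R]_k) x p :
  convex_set C -> is_cone C -> C p ->
  (forall y, C y -> enorm (x - p) <= enorm (x - y)) ->
  dot (x - p) p = 0 /\ forall y, C y -> dot (x - p) y <= 0.
Proof.
move=> cC coC Cp hp; have hv := nearest_convex cC Cp hp.
have h0 := hv _ (coC p 0 Cp (lexx 0)); have h2 := hv _ (coC p 2 Cp (ler0n _ 2)).
rewrite scale0r sub0r dotNr in h0.
rewrite [2 *: p - p](_ : _ = p) in h2; last by rewrite scalerDl scale1r addrK.
have d0 : dot (x - p) p = 0 by lra.
by split => // y Cy; have := hv _ Cy; rewrite dotBr d0 subr0.
Qed.

Lemma cone_separation k (C : set 'cV[R]_k) q :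
  C !=set0 -> closed_set C -> convex_set C -> is_cone C -> ~ C q ->
  exists h, 0 < dot h q /\ forall c, C c -> dot h c <= 0.
Proof.
move=> C0 cC cvC coC nq; have [p Cp hp] := exists_nearest q C0 cC.
have [d0 hc] := nearest_cone cvC coC Cp hp.
exists (q - p); split => //.
rewrite -[q in dot _ q](subrK p) dotDr d0 addr0 -enorm_sqr exprn_gt0 //.
by apply: enorm_gt0; rewrite subr_eq0; apply: contraPneq nq => ->.
Qed.

End Distance.

Section Image.
Variables (R : realType) (m n : nat) (A : 'M[R]_(m, n)).

Lemma imA_mulmx x : imA A (A *m x). Proof. by exists x. Qed.

Lemma imA_comb u v a c : imA A u -> imA A v -> imA A (a *: u + c *: v).
Proof.
move=> [x _ <-] [y _ <-]; exists (a *: x + c *: y) => //.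
by rewrite mulmxDr !scalemxAr.
Qed.

Lemma imAN u : imA A u -> imA A (- u).
Proof. by move=> [x _ <-]; exists (- x) => //; rewrite mulmxN. Qed.

Lemma imA_submx y : imA A y -> (y^T <= A^T)%MS.
Proof. by move=> [x _ <-]; rewrite trmx_mul submxMl. Qed.

Lemma submx_trmx_scale k (d y : 'cV[R]_k) : (y^T <= d^T)%MS -> exists c, y = c *: d.
Proof.
move/submxP => [D e]; exists (D 0 0); rewrite -[y]trmxK e trmx_mul trmxK.
by apply/matrixP => i j; rewrite (ord1 j) !mxE big_ord1 !mxE mulrC.
Qed.

Lemma imA_rank1 d : imA A d -> d != 0 -> \rank A = 1%N ->
  forall y, imA A y -> exists c, y = c *: d.
Proof.
move=> dA d0 r1 y yA; apply: submx_trmx_scale.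
have := mxrank_leqif_eq (imA_submx dA).
rewrite rank_rV trmx_eq0 d0 mxrank_tr r1 => /leqif_refl /andP [_ sA].
exact: submx_trans (imA_submx yA) sA.
Qed.

Lemma rank1_mulmxE d : imA A d -> d != 0 -> \rank A = 1%N ->
  forall x, A *m x = (dot (A^T *m d) x / dot d d) *: d.
Proof.
move=> dA d0 r1 x; have [c ec] := imA_rank1 dA d0 r1 (imA_mulmx x).
have dd0 : dot d d != 0 by apply: contra d0 => /eqP/dotmm_eq0 ->.
by rewrite dot_trmx_mul ec dotZr mulfK.
Qed.

Lemma imA_not_line d : imA A d -> d != 0 -> \rank A != 1%N ->
  exists x, forall c, A *m x != c *: d.
Proof.
move=> [xd _ exd] d0 r1; apply/not_existsP => hall; apply/negP: r1; rewrite negbK.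
have hc x : exists c, A *m x = c *: d.
  by have /existsNP [c /negP] := hall x; rewrite negbK => /eqP ->; exists c.
have sA : (A^T <= d^T)%MS.
  apply/row_subP => j; rewrite -tr_col colE.
  by have [c ->] := hc (delta_mx j 0); rewrite linearZ scalemx_sub.
have le1 : (\rank A <= 1)%N.
  by rewrite -mxrank_tr; apply: leq_trans (mxrankS sA) (rank_leq_row _).
have : \rank A != 0%N.
  by rewrite mxrank_eq0; apply: contra d0 => /eqP A0; rewrite -exd A0 mul0mx.
by case: (\rank A) le1 => [|[|]].
Qed.

Lemma imA_orthogonal d : imA A d -> d != 0 -> \rank A != 1%N ->
  exists w, [/\ imA A w, w != 0 & dot w d = 0].
Proof.
move=> dA d0 r1; have [x hx] := imA_not_line dA d0 r1.
have dd0 : dot d d != 0 by apply: contra d0 => /eqP/dotmm_eq0 ->.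
pose a := dot (A *m x) d / dot d d.
exists (1 *: (A *m x) + (- a) *: d); split.
- exact: imA_comb (imA_mulmx x) dA.
- by rewrite scale1r scaleNr; apply: contra (hx a) => /eqP e; rewrite -subr_eq0 e.
- by rewrite dotDl !dotZl mul1r /a mulNr divfK // subrr.
Qed.

Lemma imA_closed : closed_set (imA A).
Proof.
move=> x hx; suff /submxP [D e] : (x^T <= A^T)%MS.
  by exists D^T => //; rewrite -(trmxK x) e trmx_mul trmxK.
rewrite submxE; apply/eqP/matrixP => i j; rewrite (ord1 i) [RHS]mxE.
pose c := col j (cokermx A^T).
have ex (z : 'cV[R]_m) : (z^T *m cokermx A^T) 0 j = dot z c.
  by rewrite mxE /dot; apply: eq_bigr => k _; rewrite !mxE.
rewrite ex; apply/normr0_eq0/eqP; rewrite eq_le normr_ge0 andbT.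
apply/ler_addgt0Pl => e e0; rewrite addr0.
have c1 : 0 < enorm c + 1 by rewrite ltr_pwDr // enorm_ge0.
have [y yA hy] := hx (e / (enorm c + 1)) (divr_gt0 e0 c1).
have y0 : dot y c = 0.
  by rewrite -ex; move/imA_submx: yA; rewrite submxE => /eqP ->; rewrite mxE.
rewrite -[dot x c]subr0 -y0 -dotBl; apply: le_trans (normr_dot_le _ _) _.
rewrite ltr_pdivlMr // in hy.
have := enorm_ge0 (x - y); nra.
Qed.

Lemma imA_trmx_mul_neq0 d : imA A d -> d != 0 -> A^T *m d != 0.
Proof.
move=> [xd _ exd] d0; apply: contra d0 => /eqP g0; apply/eqP/dotmm_eq0.
by rewrite -{2}exd -dot_trmx_mul g0 dot0l.
Qed.

End Image.

Section RegularCone.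
Variables (R : realType) (m : nat) (K : set 'cV[R]_m).
Hypothesis regK : regular_cone K.

Lemma rconeZ x l : K x -> 0 <= l -> K (l *: x). Proof. by case: regK => + _ _ _ _; apply. Qed.
Lemma rcone_pointed : pointed K. Proof. by case: regK. Qed.
Lemma rcone_closed : closed_set K. Proof. by case: regK. Qed.
Lemma rcone_convex : convex_set K. Proof. by case: regK. Qed.

Lemma rcone0 : K 0.
Proof.
case: regK => _ _ _ _ [x [e e0 he]].
by have := rconeZ (he x _) (lexx 0); rewrite scale0r subrr enorm0; apply.
Qed.

Lemma rcone_neq0 : K !=set0. Proof. by exists 0; exact: rcone0. Qed.

Lemma rconeD x y : K x -> K y -> K (x + y).
Proof.
move=> Kx Ky; have := rconeZ (rcone_convex Kx Ky (t:=1/2) _ _) (ler0n _ 2).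
have -> : 2 *: ((1/2) *: x + (1 - 1/2) *: y) = x + y.
  by apply/matrixP => i j; rewrite !mxE; field.
by apply; lra.
Qed.

Lemma not_interior_boundary x : K x -> ~ interior_pt K x -> boundary K x.
Proof. by move=> Kx ni; split => // e e0; exists x => //; rewrite subrr enorm0. Qed.

Lemma cone_orthogonal_eq0 u : (forall y, K y -> dot u y = 0) -> u = 0.
Proof.
case: regK => _ _ _ _ [x0 [e0 e0p he]] z.
have Kx0 : K x0 by apply: he; rewrite subrr enorm0.
have np : 0 < enorm u + 1 by have := enorm_ge0 u; lra.
pose s := e0 / (enorm u + 1).
have s0 : 0 < s by rewrite divr_gt0.
have Ky : K (x0 + s *: u).
  apply: he; rewrite addrAC subrr add0r enormZ gtr0_norm //.
  rewrite /s mulrAC ltr_pdivrMr // ltr_pM2l //; lra.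
have /eqP := z _ Ky; rewrite dotDr dotZr z // add0r.
by rewrite mulf_eq0 gt_eqF //= => /eqP /dotmm_eq0.
Qed.

Lemma normal_coneP z u : normal_cone K z u <->
  [/\ K z, polar K u & dot u z = 0].
Proof.
split=> [[Kz h]|[Kz h dz]]; last by split => // y Ky; rewrite dotBr dz subr0 h.
have h0 := h _ rcone0; rewrite sub0r dotNr in h0.
have := h _ (rconeZ Kz (ler0n _ 2)).
rewrite [2 *: z - z](_ : _ = z); last by rewrite scalerDl scale1r addrK.
move=> h2; have dz : dot u z = 0 by lra.
by split => // y Ky; have := h _ (rconeD Ky Kz); rewrite addrK.
Qed.

Lemma normal_cone0 z : K z -> normal_cone K z 0.
Proof. by move=> Kz; split => // y _; rewrite dot0l. Qed.

Lemma closed_normal_cone z : K z -> closed_set (normal_cone K z).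
Proof.
move=> Kz; have -> : normal_cone K z = polar K `&`
    ([set u | dot u z <= 0] `&` [set u | 0 <= dot u z]).
  apply/seteqP; split => u.
    by move=> /normal_coneP [_ h dz]; split => //; rewrite /= dz.
  by move=> [h [/= h1 h2]]; apply/normal_coneP; split => //; apply/eqP; rewrite eq_le h1.
have lip : lipschitz (fun u => dot u z) (enorm z).
  by move=> u v; rewrite !(dotC _ z) dot_lipschitz.
apply: closed_setI; first exact: closed_polar.
apply: closed_setI.
  exact: closed_sublevel (enorm_ge0 z) lip.
exact: closed_superlevel (enorm_ge0 z) lip.
Qed.

Lemma dist_translate_scale p q l : K p -> 0 < l ->
  dist (p + l *: q) K <= l * dist q K.
Proof.
move=> Kp l0; rewrite mulrC -ler_pdivrMr //.
apply: dist_ge rcone_neq0 _ => y Ky; rewrite ler_pdivrMr //.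
apply: le_trans (dist_le _ (rconeD Kp (rconeZ Ky (ltW l0)))) _.
have -> : p + l *: q - (p + l *: y) = l *: (q - y).
  by rewrite scalerBr opprD addrACA subrr add0r.
by rewrite enormZ gtr0_norm // mulrC.
Qed.

End RegularCone.

Section FarRays.
Variables (R : realType) (m : nat) (K : set 'cV[R]_m).
Hypothesis regK : regular_cone K.

Lemma normal_half_line d u1 u2 : dim_one (normal_cone K d) ->
  normal_cone K d u1 -> normal_cone K d u2 -> u1 != 0 ->
  exists2 l, 0 <= l & u2 = l *: u1.
Proof.
move=> [_ [v v0 sub]] n1 n2 u10.
have [a _ e1] := sub _ n1; have [c _ e2] := sub _ n2.
have a0 : a != 0 by apply: contraNneq u10 => a0; rewrite -e1 a0 scale0r.
have e : u2 = (c / a) *: u1 by rewrite -e1 -e2 scalerA divfK.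
have [l0|ln] := lerP 0 (c / a); first by exists (c / a).
move: n1 n2 => /(normal_coneP regK) [_ h1 _] /(normal_coneP regK) [_ h2 _].
case/eqP: u10; apply: (cone_orthogonal_eq0 regK) => y Ky.
have := h1 _ Ky; have := h2 _ Ky; rewrite e dotZl; nra.
Qed.

(* The unit outer normal at the nearest point of [K] to [t d + w] *)
Lemma polar_unit_separating d w t c0 : K d -> 0 < t -> 0 < c0 ->
  c0 <= dist (t *: d + w) K ->
  exists u, [/\ enorm u = 1, polar K u, c0 <= dot u w & - dot u d <= enorm w / t].
Proof.
move=> Kd t0 c00 hc; set q := t *: d + w.
have [p Kp hp] := exists_nearest q (rcone_neq0 regK) (rcone_closed regK).
have [dp hcone] := nearest_cone (rcone_convex regK) (rconeZ regK) Kp hp.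
rewrite (dist_nearest Kp hp) in hc.
have hpos : 0 < enorm (q - p) by lra.
pose u := (enorm (q - p))^-1 *: (q - p).
have nu : enorm u = 1 by rewrite enormZ ger0_norm ?invr_ge0 ?ltW // mulVf ?gt_eqF.
have hK : polar K u.
  by move=> y Ky; rewrite dotZl mulr_ge0_le0 ?hcone // invr_ge0 ltW.
have duq : dot u q = enorm (q - p).
  rewrite -[q in dot _ q](subrK p) dotDr !dotZl dp mulr0 addr0 -enorm_sqr.
  by rewrite expr2 mulKf // gt_eqF.
rewrite /q dotDr dotZr -/q in duq.
have ud := hK _ Kd; have cs := dot_le_enormM u w; rewrite nu mul1r in cs.
have tud : t * dot u d <= 0 by rewrite mulr_ge0_le0 // ltW.
exists u; split => //; first lra.
by rewrite ler_pdivlMr // mulNr mulrC; lra.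
Qed.

Lemma normal_of_far_ray d w c0 : K d -> 0 < c0 ->
  (forall t, 0 <= t -> c0 <= dist (t *: d + w) K) ->
  exists u, [/\ normal_cone K d u, enorm u = 1 & c0 <= dot u w].
Proof.
move=> Kd c00 far.
pose C := [set u | enorm (u - 0) <= 1] `&` [set u | 1 <= enorm (u - 0)] `&`
          polar K `&` [set u | c0 <= dot u w].
have memC u : C u <-> [/\ enorm u = 1, polar K u & c0 <= dot u w].
  rewrite /C /= subr0; split; first by move=> [[[h1 h2] h3] h4]; split => //; lra.
  by move=> [h1 h2 h3]; rewrite h1; do !split.
have lipw : lipschitz (fun u => dot u w) (enorm w).
  by move=> u v; rewrite !(dotC _ w) dot_lipschitz.
have cC : closed_set C.
  apply: closed_setI; last exact: closed_superlevel (enorm_ge0 w) lipw.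
  apply: closed_setI; last exact: closed_polar.
  apply: closed_setI; first exact: closed_ball.
  exact: closed_superlevel ler01 (enorm_lipschitz 0).
have [u [u1 uK uw _]] := polar_unit_separating Kd ltr01 c00 (far 1 ler01).
have C0 : C !=set0 by exists u; apply/memC.
have bC v : C v -> enorm v <= 1 by move=> /memC [-> _ _].
have lipd : lipschitz (fun u => - dot u d) (enorm d).
  by move=> x y; rewrite -opprD normrN !(dotC _ d) dot_lipschitz.
have [v /memC [v1 vK vw] vmin] :=
  lipschitz_min_attained C0 cC bC (enorm_ge0 d) lipd.
exists v; split => //; apply/(normal_coneP regK); split => //.
(* otherwise [polar_unit_separating] with a large [t] beats the minimum *)
apply/eqP; rewrite eq_le vK //= leNgt; apply/negP => neg.
have nw := enorm_ge0 w.
have t0 : 0 < (enorm w + 1) / (- dot v d) by rewrite divr_gt0 //; lra.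
have [v' [g1 g2 g3 g4]] := polar_unit_separating Kd t0 c00 (far _ (ltW t0)).
have := vmin v' (proj2 (memC v') (And3 g1 g2 g3)).
move: g4; rewrite invf_div mulrA ler_pdivlMr; last lra.
move=> g4 hm; have : - dot v d * (enorm w + 1) <= enorm w * (- dot v d) by nra.
nra.
Qed.

Lemma far_rays_contra d w c0 : K d -> dim_one (normal_cone K d) -> 0 < c0 ->
  (forall t, 0 <= t -> c0 <= dist (t *: d + w) K) ->
  (forall t, 0 <= t -> c0 <= dist (t *: d - w) K) -> False.
Proof.
move=> Kd dd c00 farP farN.
have [u1 [n1 e1 d1]] := normal_of_far_ray Kd c00 farP.
have [u2 [n2 e2 d2]] := normal_of_far_ray Kd c00 farN.
have u10 : u1 != 0 by apply/eqP => u0; move: e1; rewrite u0 enorm0; lra.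
have [l l0 e] := normal_half_line dd n1 n2 u10.
rewrite e dotZl dotNr in d2.
have : 0 <= l * dot u1 w by rewrite mulr_ge0 //; lra.
lra.
Qed.

End FarRays.

Section SmoothCone.
Variables (R : realType) (m : nat) (K : set 'cV[R]_m).
Hypothesis smK : smooth_cone K.

Lemma smooth_regular : regular_cone K. Proof. by case: smK. Qed.

Lemma boundary_mid_ray y z : K y -> K z ->
  boundary K ((1/2) *: y + (1 - 1/2) *: z) -> exists g, ray g y /\ ray g z.
Proof.
move=> Ky Kz bm; case: smK => _ hb _; have [g [_ [_ _ face_g]] hg] := hb _ bm.
by exists g; apply: (face_g y z (1/2) Ky Kz _ _ hg); lra.
Qed.

Lemma smooth_normal_dim_one x : boundary K x -> x != 0 -> dim_one (normal_cone K x).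
Proof.
by move=> bx x0; case: smK => _ hb hn; have [g eg rg] := hb x bx; exact: hn g x eg rg x0.
Qed.

End SmoothCone.

Section ErrorBound.
Variables (R : realType) (m n : nat) (K : set 'cV[R]_m) (A : 'M[R]_(m, n)).
Variable b : 'cV[R]_m.
Hypothesis regK : regular_cone K.

Lemma imA_near_dist_gt0 d w t : K !=set0 -> closed_set K ->
  (forall z, imA A z -> K z -> exists l, z = l *: d) ->
  imA A d -> imA A w -> w != 0 -> dot w d = 0 ->
  exists2 mu, 0 < mu & forall y, imA A y ->
    enorm (y - (t *: d + w)) <= enorm w / 2 -> mu <= dist y K.
Proof.
move=> K0 clK hline dA wA w0 wd; set q := t *: d + w.
have nw := enorm_gt0 w0.
pose Y := imA A `&` [set y | enorm (y - q) <= enorm w / 2].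
have Yq : Y !=set0.
  exists q; split; first by rewrite /q -[w]scale1r; exact: imA_comb.
  by rewrite /= subrr enorm0 divr_ge0 ?ltW.
have cY : closed_set Y by apply: closed_setI; [exact: imA_closed | exact: closed_ball].
have bY y : Y y -> enorm y <= enorm q + enorm w / 2.
  move=> [_ /= hy]; have := ler_enorm_distD y q 0; rewrite !subr0; lra.
have [ys [ysA hys] ysmin] :=
  lipschitz_min_attained Yq cY bY ler01 (dist_lipschitz K0).
exists (dist ys K); last by move=> y yA hy; apply: ysmin.
rewrite lt_neqAle dist_ge0 // andbT; apply/negP => /eqP/esym/(dist0_closed K0 clK) Kys.
(* [ys] would lie on the line through [d], at distance at least [|w|] from [q] *)
have [l el] := hline _ ysA Kys.
have : enorm w <= enorm (ys - q).
  apply: ler_of_sqr; first exact: enorm_ge0.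
  rewrite [ys - q](_ : _ = - w - (t - l) *: d); last first.
    by rewrite el /q; apply/matrixP => i j; rewrite !mxE; ring.
  rewrite !enorm_sqr dotBmZ !dotNl !dotNr opprK wd oppr0 mulr0 subr0.
  by rewrite lerDl mulr_ge0 ?sqr_ge0 ?dotmm_ge0.
rewrite /= in hys; lra.
Qed.

(* Blow up [q] along a feasible point: [x0 + l xq] is mapped near [l q], far from
   every feasible point, while its residual is only [l dist(q, K)]. *)
Lemma error_bound_dist_ge al C q r mu : feas A b K !=set0 -> 0 < al -> 0 < C ->
  (forall x, enorm (A *m x) <= C * enorm x) ->
  (forall x, dist x (feas A b K) <= al * dist (A *m x + b) K) ->
  imA A q -> 0 < mu -> (forall y, imA A y -> enorm (y - q) <= r -> mu <= dist y K) ->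
  r / (al * C) <= dist q K.
Proof.
move=> [x0 Sx0] al0 C0 hC heb [xq _ exq] mu0 hmu.
pose p0 := A *m x0 + b; have np0 := enorm_ge0 p0.
pose l := (enorm p0 + 1) / mu.
have l0 : 0 < l by rewrite divr_gt0 //; lra.
pose x := x0 + l *: xq.
have ex : A *m x + b = p0 + l *: q by rewrite mulmxDr -scalemxAr exq addrAC.
have up : dist x (feas A b K) <= al * (l * dist q K).
  apply: le_trans (heb x) (ler_wpM2l (ltW al0) _).
  by rewrite ex; exact: dist_translate_scale.
have low : l * r / C <= dist x (feas A b K).
  apply: dist_ge => [|s Ss]; first by exists x0.
  rewrite ler_pdivrMr // [enorm _ * _]mulrC; apply: le_trans _ (hC (x - s)).
  rewrite leNgt; apply/negP => hlt.
  pose y := l^-1 *: (A *m s + b - p0).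
  have yA : imA A y.
    exists (l^-1 *: (s - x0)) => //.
    by rewrite -scalemxAr mulmxBr /y /p0 opprD addrACA subrr addr0.
  have hyq : enorm (y - q) < r.
    have -> : y - q = - l^-1 *: (A *m (x - s)).
      rewrite mulmxBr -[A *m x](addrK b) ex /y.
      by apply/matrixP => i j; rewrite !mxE; field; rewrite gt_eqF.
    by rewrite enormZ normrN ger0_norm ?invr_ge0 ?ltW // mulrC ltr_pdivrMr // mulrC.
  have := hmu y yA (ltW hyq); apply/negP; rewrite -ltNge.
  have Ks : K (l^-1 *: (A *m s + b)) by apply: rconeZ; rewrite // invr_ge0 ltW.
  apply: le_lt_trans (dist_le y Ks) _.
  rewrite [y - _](_ : _ = - (l^-1 *: p0)); last by rewrite /y scalerBr addrAC subrr add0r.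
  rewrite enormN enormZ ger0_norm ?invr_ge0 ?ltW // /l invf_div mulrAC.
  by rewrite ltr_pdivrMr ?ltr_pM2l //; lra.
have := le_trans low up; rewrite ler_pdivrMr // ler_pdivrMr ?mulr_gt0 //.
have -> : al * (l * dist q K) * C = l * (dist q K * (al * C)) by ring.
by rewrite ler_pM2l.
Qed.

End ErrorBound.

Section BoundaryImage.
Variables (R : realType) (m n : nat) (K : set 'cV[R]_m) (A : 'M[R]_(m, n)).
Variable b : 'cV[R]_m.
Hypothesis smK : smooth_cone K.
Hypothesis imA_bd : imA A `&` K `<=` boundary K.

Let regK := smooth_regular smK.

Lemma imA_cone_ray d : imA A d -> K d -> d != 0 ->
  forall z, imA A z -> K z -> exists2 l, 0 <= l & z = l *: d.
Proof.
move=> dA Kd d0 z zA Kz.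
have mA : imA A ((1/2) *: d + (1 - 1/2) *: z) by exact: imA_comb.
have mK : K ((1/2) *: d + (1 - 1/2) *: z) by apply: rcone_convex => //; lra.
have [g [[l l0 el] [l' l'0 el']]] := boundary_mid_ray smK Kd Kz (imA_bd (conj mA mK)).
have l_neq0 : l != 0 by apply: contraNneq d0 => l00; rewrite -el l00 scale0r.
by exists (l' / l); rewrite ?divr_ge0 // -el -el' scalerA divfK.
Qed.

Lemma imA_normal_dim_one d : imA A d -> K d -> d != 0 -> dim_one (normal_cone K d).
Proof.
move=> dA Kd d0; have bd : boundary K d by apply: imA_bd.
exact: (smooth_normal_dim_one smK bd d0).
Qed.

(* By [error_bound_dist_ge], an error bound keeps all points [t d + w] and
   [t d - w] of [Im A] uniformly away from [K]. *)
Lemma no_error_bound d w : feas A b K !=set0 -> imA A d -> K d -> d != 0 ->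
  imA A w -> w != 0 -> dot w d = 0 -> ~ global_error_bound A b K.
Proof.
move=> Sne dA Kd d0 wA w0 wd [al al0 heb].
have [C C0 hC] := enorm_mulmx_le A.
have hline z : imA A z -> K z -> exists l, z = l *: d.
  by move=> zA Kz; have [l _ ->] := imA_cone_ray dA Kd d0 zA Kz; exists l.
have far v t : imA A v -> v != 0 -> dot v d = 0 ->
    enorm v / 2 / (al * C) <= dist (t *: d + v) K.
  move=> vA v0 vd; have [mu mu0 hmu] := imA_near_dist_gt0 t (rcone_neq0 regK)
    (rcone_closed regK) hline dA vA v0 vd.
  have vA' : imA A (t *: d + v) by rewrite -[v]scale1r; exact: imA_comb.
  exact: (error_bound_dist_ge regK Sne al0 C0 hC heb vA' mu0 hmu).
have c0 : 0 < enorm w / 2 / (al * C) by rewrite !divr_gt0 ?mulr_gt0 ?enorm_gt0.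
apply: (far_rays_contra regK Kd (imA_normal_dim_one dA Kd d0) c0).
  by move=> t _; exact: far.
move=> t _; rewrite -(enormN w); apply: far; first exact: imAN.
  by rewrite oppr_eq0.
by rewrite dotNl wd oppr0.
Qed.

(* ACQ at the point where [A x + b = 0] would write [A^T w] and [- A^T w] as
   [A^T u] for normals [u] at [d], which form a half-line. *)
Lemma not_ACQ d w : imA A b -> imA A d -> K d -> d != 0 ->
  imA A w -> w != 0 -> dot w d = 0 -> ~ ACQ A b K.
Proof.
move=> [xb _ exb] dA Kd d0 [xw _ exw] w0 wd acq.
have [xd _ exd] := dA.
have z0 : A *m (- xb) + b = 0 by rewrite mulmxN exb addNr.
have Sx0 : feas A b K (- xb) by rewrite /feas /= z0; exact: rcone0.
pose v := A^T *m w.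
have v0 : v != 0.
  apply: contra w0 => /eqP v00; apply/eqP/dotmm_eq0.
  by rewrite -{2}exw -dot_trmx_mul -/v v00 dot0l.
have nS c : normal_cone (feas A b K) (- xb) (c *: v).
  split => // y Sy; rewrite dotZl dot_trmx_mul.
  rewrite [A *m _](_ : _ = A *m y + b); last by rewrite mulmxBr mulmxN opprK exb.
  have [|l _ ->] := imA_cone_ray dA Kd d0 _ Sy.
    by rewrite -exb -mulmxDr; exact: imA_mulmx.
  by rewrite dotZr wd !mulr0.
have normal_d c : exists2 u, normal_cone K d u & A^T *m u = c *: v.
  have := nS c; rewrite -acq // z0 => -[u /(normal_coneP regK) [_ hK _] eu].
  exists u => //; apply/(normal_coneP regK); split => //.
  by rewrite -exd -dot_trmx_mul eu dotZl /v dot_trmx_mul exd wd mulr0.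
have [u nu eu] := normal_d 1; have [u' nu' eu'] := normal_d (-1).
have u0 : u != 0 by apply: contraNneq v0 => u00; rewrite -(scale1r v) -eu u00 mulmx0.
have [l l0 el] := normal_half_line regK (imA_normal_dim_one dA Kd d0) nu nu' u0.
move: eu'; rewrite el -scalemxAr eu scale1r => /eqP.
rewrite -subr_eq0 -scalerBl scaler_eq0 (negbTE v0) orbF subr_eq0 => /eqP l1.
by move: l0; rewrite l1 oppr_ge0 ler10.
Qed.

(* Otherwise the midpoint of [A x0 + b] and [A x0 + b + 2 d] is a boundary point,
   so both lie on one ray, which must be the ray of [d]. *)
Lemma slater_point d : feas A b K !=set0 -> ~ imA A b -> imA A d -> K d -> d != 0 ->
  exists x, interior_pt K (A *m x + b).
Proof.
move=> [x0 Sx0] nb dA Kd d0; apply/not_existsP => nint; apply: nb.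
have [xd _ exd] := dA; rewrite /feas /= in Sx0; set p := A *m x0 + b in Sx0.
have K2 : K (p + 2%:R *: d) by apply: (rconeD regK Sx0); apply: (rconeZ regK Kd).
have em : (1/2) *: p + (1 - 1/2) *: (p + 2%:R *: d) = A *m (x0 + xd) + b.
  by rewrite mulmxDr exd /p; apply/matrixP => i j; rewrite !mxE; field.
have bm : boundary K ((1/2) *: p + (1 - 1/2) *: (p + 2%:R *: d)).
  apply: not_interior_boundary; first by apply: rcone_convex => //; lra.
  by rewrite em; exact: nint.
have [g [[l _ el] [l' _ el']]] := boundary_mid_ray smK Sx0 K2 bm.
have e2 : 2%:R *: d = (l' - l) *: g by rewrite scalerBl el el' addrAC subrr add0r.
have dl : l' - l != 0.
  by apply: contraNneq d0 => e; move/eqP: e2; rewrite e scale0r scaler_eq0 pnatr_eq0.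
have hp : p = (l / (l' - l) * 2%:R) *: d.
  by rewrite -el -!scalerA e2 [_^-1 *: _]scalerA mulVf ?scale1r.
have -> : b = (l / (l' - l) * 2%:R) *: (A *m xd) + (-1) *: (A *m x0).
  by rewrite exd -hp /p scaleN1r addrC addKr.
by apply: imA_comb; exact: imA_mulmx.
Qed.

End BoundaryImage.

Section Closure.
Variables (R : realType) (k : nat) (P : set 'cV[R]_k).

Definition closure_set := [set y | closure_pt P y].

Lemma subset_closure_set : P `<=` closure_set.
Proof. by move=> y Py e e0; exists y => //; rewrite subrr enorm0. Qed.

Lemma closed_closure_set : closed_set closure_set.
Proof.
move=> x hx e e0; have e2 : 0 < e / 2 by rewrite divr_gt0.
have [y hy hxy] := hx _ e2; have [z Pz hyz] := hy _ e2.
by exists z => //; apply: le_lt_trans (ler_enorm_distD x y z) _; lra.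
Qed.

Lemma convex_closure_set : convex_set P -> convex_set closure_set.
Proof.
move=> cP x y t hx hy t0 t1 e e0.
have [x' Px' hx'] := hx _ e0; have [y' Py' hy'] := hy _ e0.
exists (t *: x' + (1 - t) *: y'); first exact: cP.
have -> : t *: x + (1 - t) *: y - (t *: x' + (1 - t) *: y') =
          t *: (x - x') + (1 - t) *: (y - y').
  by apply/matrixP => i j; rewrite !mxE; ring.
apply: le_lt_trans (ler_enormD _ _) _; rewrite !enormZ !ger0_norm ?subr_ge0 //.
have [->|tp] := eqVneq t 0; first by rewrite mul0r add0r subr0 mul1r.
have t_gt0 : 0 < t by rewrite lt_neqAle eq_sym tp t0.
have h1 : t * enorm (x - x') < t * e by rewrite ltr_pM2l.
have h2 : (1 - t) * enorm (y - y') <= (1 - t) * e by rewrite ler_wpM2l ?subr_ge0 // ltW.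
lra.
Qed.

Lemma cone_closure_set : is_cone P -> P 0 -> is_cone closure_set.
Proof.
move=> cP P0 x t hx t0 e e0.
have [->|tp] := eqVneq t 0; first by exists 0 => //; rewrite scale0r subrr enorm0.
have t_gt0 : 0 < t by rewrite lt_neqAle eq_sym tp t0.
have [y Py hy] := hx (e / t) (divr_gt0 e0 t_gt0).
exists (t *: y); first exact: cP.
by rewrite -scalerBr enormZ gtr0_norm // mulrC -ltr_pdivlMr.
Qed.

End Closure.

Section LinearImage.
Variables (R : realType) (m n : nat) (M : 'M[R]_(m, n)) (C : set 'cV[R]_n).

Lemma convex_image_mulmx : convex_set C -> convex_set [set M *m u | u in C].
Proof.
move=> cC _ _ t [u Cu <-] [v Cv <-] t0 t1; exists (t *: u + (1 - t) *: v).
  exact: cC.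
by rewrite mulmxDr -!scalemxAr.
Qed.

Lemma cone_image_mulmx : is_cone C -> is_cone [set M *m u | u in C].
Proof.
by move=> cC _ t [u Cu <-] t0; exists (t *: u); [exact: cC | rewrite -scalemxAr].
Qed.

End LinearImage.

Section NormalCone.
Variables (R : realType) (m : nat) (K : set 'cV[R]_m).
Hypothesis regK : regular_cone K.

Lemma convex_normal_cone z : K z -> convex_set (normal_cone K z).
Proof.
move=> Kz u1 u2 t [_ n1] [_ n2] t0 t1; split => // y Ky; rewrite dotDl !dotZl.
have := mulr_ge0_le0 t0 (n1 _ Ky).
have t1' : 0 <= 1 - t by rewrite subr_ge0.
have := mulr_ge0_le0 t1' (n2 _ Ky); lra.
Qed.

Lemma cone_normal_cone z : K z -> is_cone (normal_cone K z).
Proof. by move=> Kz u t [_ n1] t0; split => // y Ky; rewrite dotZl mulr_ge0_le0 // n1. Qed.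

Definition dir_cone z := [set y | exists k s, [/\ K k, 0 <= s & y = k - s *: z]].

Lemma dir_cone0 z : dir_cone z 0.
Proof. by exists 0, 0; rewrite scale0r subr0; split => //; exact: rcone0. Qed.

Lemma convex_dir_cone z : convex_set (dir_cone z).
Proof.
move=> _ _ t [k1 [s1 [K1 s10 ->]]] [k2 [s2 [K2 s20 ->]]] t0 t1.
exists (t *: k1 + (1 - t) *: k2), (t * s1 + (1 - t) * s2); split.
- exact: rcone_convex.
- by rewrite addr_ge0 // mulr_ge0 // subr_ge0.
- by apply/matrixP => i j; rewrite !mxE; ring.
Qed.

Lemma cone_dir_cone z : is_cone (dir_cone z).
Proof.
move=> _ t [k1 [s1 [K1 s10 ->]]] t0; exists (t *: k1), (t * s1); split.
- exact: rconeZ.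
- exact: mulr_ge0.
- by rewrite scalerBr scalerA.
Qed.

(* Bipolar theorem for the cone of feasible directions of [K] at [z]. *)
Lemma closure_dir_cone z q : K z ->
  (forall u, normal_cone K z u -> dot u q <= 0) -> closure_set (dir_cone z) q.
Proof.
move=> Kz hq; apply: contrapT => nq.
have [|u [uq uc]] := cone_separation _ (@closed_closure_set _ _ (dir_cone z))
  (convex_closure_set (@convex_dir_cone z)) (cone_closure_set (@cone_dir_cone z) (dir_cone0 z)) nq.
  by exists 0; apply: subset_closure_set; exact: dir_cone0.
suff /hq : normal_cone K z u by lra.
split => // y Ky; apply: uc; apply: subset_closure_set.
by exists y, 1; split => //; rewrite scale1r.
Qed.

End NormalCone.

Section Slater.
Variables (R : realType) (m n : nat) (K : set 'cV[R]_m) (A : 'M[R]_(m, n)).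
Variables (b : 'cV[R]_m) (h0 : 'cV[R]_n).
Hypothesis regK : regular_cone K.
Hypothesis slater : interior_pt K (A *m h0 + b).

(* Testing a normal [u] at [A x + b] against the ball around the Slater point. *)
Lemma normal_enorm_le : exists2 c, 0 < c & forall x u,
  normal_cone K (A *m x + b) u -> c * enorm u <= enorm (A^T *m u) * enorm (h0 - x).
Proof.
have [r r0 ball_r] := slater; exists (r / 2); first by rewrite divr_gt0.
move=> x u /(normal_coneP regK) [_ hK dz].
have [->|u0] := eqVneq u 0; first by rewrite enorm0 mulr0 mulmx0 enorm0 mul0r.
have nu0 := enorm_gt0 u0.
have Ky : K (A *m h0 + b + (r / 2 / enorm u) *: u).
  apply: ball_r; rewrite addrAC subrr add0r enormZ ger0_norm ?divr_ge0 ?enorm_ge0 ?ltW //.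
  by rewrite divfK ?gt_eqF //; lra.
have := hK _ Ky; rewrite !dotDr dotZr -enorm_sqr expr2 mulrA divfK ?gt_eqF //.
have -> : dot u (A *m h0) = dot u (A *m (h0 - x)) + dot u (A *m x).
  by rewrite mulmxBr dotBr subrK.
rewrite -dot_trmx_mul => hy; rewrite dotDr in dz.
have := normr_dot_le (A^T *m u) (h0 - x); rewrite ler_norml => /andP [cs _].
lra.
Qed.

Lemma closed_mulmx_normal x : K (A *m x + b) ->
  closed_set [set A^T *m u | u in normal_cone K (A *m x + b)].
Proof.
move=> Kz v hv; set z := A *m x + b.
have [c c0 hc] := normal_enorm_le.
have [C C0 hC] := enorm_mulmx_le A^T.
pose B := (enorm v + 1) * enorm (h0 - x) / c.
pose U := normal_cone K z `&` [set u | enorm (u - 0) <= B].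
have near_U u : normal_cone K z u -> enorm (A^T *m u - v) < 1 -> U u.
  move=> nu hu; split => //=; rewrite subr0 ler_pdivlMr // mulrC.
  apply: le_trans (hc _ _ nu) _; rewrite ler_wpM2r ?enorm_ge0 //.
  by have := ler_enorm_distD (A^T *m u) v 0; rewrite !subr0; lra.
have [_ [u0 nu0 <-] hu0] := hv _ ltr01.
have U0 : U !=set0 by exists u0; apply: near_U; rewrite // enorm_subC.
have cU : closed_set U.
  by apply: closed_setI; [exact: closed_normal_cone | exact: closed_ball].
have bU u : U u -> enorm u <= B by move=> [_ /=]; rewrite subr0.
have lip : lipschitz (fun u => enorm (A^T *m u - v)) C.
  by move=> u1 u2; apply: le_trans (enorm_lipschitz _ _ _) _; rewrite mul1r -mulmxBr hC.
have [us [nus _] usmin] := lipschitz_min_attained U0 cU bU (ltW C0) lip.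
exists us => //; apply/eqP; rewrite -subr_eq0; apply/eqP/enorm_eq0.
set g := enorm _; apply/eqP; rewrite eq_le enorm_ge0 andbT leNgt; apply/negP => g0.
have e0 : 0 < g / (g + 1) by rewrite divr_gt0 //; lra.
have [_ [u nu <-] hu] := hv _ e0; rewrite enorm_subC in hu.
have e1 : g / (g + 1) < 1 by rewrite ltr_pdivrMr; lra.
have e2 : g / (g + 1) < g by rewrite ltr_pdivrMr; nra.
have := usmin u (near_U u nu (lt_trans hu e1)); rewrite -/g; lra.
Qed.

Lemma feas_normal_dir x v h : feas A b K x ->
  (forall y, feas A b K y -> dot v (y - x) <= 0) ->
  dir_cone K (A *m x + b) (A *m h) -> dot v h <= 0.
Proof.
move=> Sx hv [k [s [Kk s0 eh]]].
have s1 : 0 < 1 + s by lra.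
have Sx' : feas A b K (x + (1 + s)^-1 *: h).
  rewrite /feas /= mulmxDr -scalemxAr eh.
  have -> : A *m x + (1 + s)^-1 *: (k - s *: (A *m x + b)) + b =
            (1 + s)^-1 *: (k + (A *m x + b)).
    by apply/matrixP => i j; rewrite !mxE; field; rewrite gt_eqF.
  by apply: (rconeZ regK (rconeD regK Kk Sx)); rewrite invr_ge0 ltW.
have := hv _ Sx'; rewrite addrAC subrr add0r dotZr.
by rewrite pmulr_rle0 // invr_gt0.
Qed.

(* Moving a limit direction towards the Slater point makes it a genuine
   feasible direction. *)
Lemma slater_dir x h e : closure_set (dir_cone K (A *m x + b)) (A *m h) -> 0 < e ->
  dir_cone K (A *m x + b) (A *m (h + e *: (h0 - x))).
Proof.
move=> hh e0; have [r r0 ball_r] := slater.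
have [_ [k [s [Kk s0 ->]]] hks] := hh (e * r) (mulr_gt0 e0 r0).
pose k1 := A *m h0 + b + e^-1 *: (A *m h - (k - s *: (A *m x + b))).
have Kk1 : K k1.
  apply: ball_r; rewrite /k1 addrAC subrr add0r enormZ ger0_norm ?invr_ge0 ?ltW //.
  by rewrite mulrC ltr_pdivrMr // mulrC.
exists (k + e *: k1), (s + e); split.
- by apply: rconeD => //; apply: rconeZ => //; exact: ltW.
- by rewrite addr_ge0 // ltW.
- rewrite mulmxDr -scalemxAr mulmxBr /k1.
  by apply/matrixP => i j; rewrite !mxE; field; rewrite gt_eqF.
Qed.

Lemma slater_ACQ : ACQ A b K.
Proof.
move=> x Sx; set z := A *m x + b; apply/seteqP; split.
  move=> _ [u [Kz hu] <-]; split => // y Sy; rewrite dot_trmx_mul.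
  have -> : A *m (y - x) = (A *m y + b) - z by rewrite mulmxBr opprD addrACA subrr addr0.
  exact: hu _ Sy.
move=> v [_ hv]; apply: contrapT => nv.
have Kz : K z := Sx.
have [|h [vh hM]] := cone_separation _ (closed_mulmx_normal Kz)
  (convex_image_mulmx (M := A^T) (convex_normal_cone Kz))
  (cone_image_mulmx (M := A^T) (cone_normal_cone Kz)) nv.
  by exists 0, 0; rewrite ?mulmx0 //; exact: normal_cone0.
have Ah : closure_set (dir_cone K z) (A *m h).
  apply: closure_dir_cone => // u nu.
  by rewrite -dot_trmx_mul dotC; apply: hM; exists u.
have dir e : 0 < e -> dot v h + e * dot v (h0 - x) <= 0.
  by move=> e0; rewrite -dotZr -dotDr; apply: feas_normal_dir Sx hv (slater_dir Ah e0).
rewrite dotC in vh; have [neg|] := ltP (dot v (h0 - x)) 0; last by have := dir 1 ltr01; lra.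
(* with [e] small, [dot v h > 0] dominates *)
pose e := dot v h / (dot v h - dot v (h0 - x)).
have e0 : 0 < e by rewrite divr_gt0 //; lra.
have := dir e e0; rewrite /e.
have -> : dot v h + dot v h / (dot v h - dot v (h0 - x)) * dot v (h0 - x) =
          dot v h * dot v h / (dot v h - dot v (h0 - x)).
  by field; rewrite gt_eqF //; lra.
by rewrite leNgt divr_gt0 ?mulr_gt0 //; lra.
Qed.

End Slater.

Section ConeLine.
Variables (R : realType) (m : nat) (K : set 'cV[R]_m).
Hypothesis regK : regular_cone K.

Lemma interior_sub_dir p d : interior_pt K p -> exists2 s, 0 < s & K (p - s *: d).
Proof.
move=> [r r0 ball_r]; pose s := r / (2 * (enorm d + 1)).
have d1 : 0 < enorm d + 1 by rewrite ltr_pwDr ?enorm_ge0.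
have s0 : 0 < s by rewrite divr_gt0 ?mulr_gt0.
exists s => //; apply: ball_r; rewrite addrAC subrr add0r enormN enormZ gtr0_norm //.
have : s * (2 * (enorm d + 1)) = r by rewrite divfK // gt_eqF ?mulr_gt0.
have := enorm_ge0 d; nra.
Qed.

Lemma polar_zero_boundary u y : polar K u -> u != 0 -> K y -> dot u y = 0 ->
  boundary K y.
Proof.
move=> pu u0 Ky uy; apply: (not_interior_boundary Ky) => -[r r0 ball_r].
have nu := enorm_gt0 u0; pose s := r / (2 * enorm u).
have s0 : 0 < s by rewrite divr_gt0 ?mulr_gt0.
have Kys : K (y + s *: u).
  apply: ball_r; rewrite addrAC subrr add0r enormZ gtr0_norm //.
  have : s * (2 * enorm u) = r by rewrite divfK // gt_eqF ?mulr_gt0.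
  nra.
have := pu _ Kys; rewrite dotDr dotZr uy add0r -enorm_sqr pmulr_rle0 //.
by rewrite leNgt exprn_gt0.
Qed.

Lemma dist_neg_dir_ge d : K d -> d != 0 ->
  exists2 c, 0 < c & forall s, 0 < s -> c * s <= dist (- (s *: d)) K.
Proof.
move=> Kd d0; have K0 := rcone_neq0 regK.
exists (dist (- d) K).
  rewrite lt_neqAle dist_ge0 // andbT; apply/negP => /eqP/esym/(dist0_closed K0).
  move=> /(_ (rcone_closed regK)) Knd.
  by move/eqP: d0; apply; exact: (rcone_pointed regK Kd Knd).
move=> s s0; apply: dist_ge => // y Ky.
have si : 0 <= s^-1 by rewrite invr_ge0 ltW.
have := dist_le (- d) (rconeZ regK Ky si).
have -> : - (s *: d) - y = s *: (- d - s^-1 *: y).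
  by rewrite scalerBr scalerA mulfV ?gt_eqF // scale1r scalerN.
by rewrite enormZ gtr0_norm // mulrC ler_pM2l.
Qed.

Lemma cone_line_cases b d t0 : K d -> K (b + t0 *: d) ->
  (forall t, K (b + t *: d)) \/
  exists t1, K (b + t1 *: d) /\ forall t, K (b + t *: d) -> t1 <= t.
Proof.
move=> Kd Kt0; have [all_t|/existsNP [tb ntb]] := pselect (forall t, K (b + t *: d)).
  by left.
right; pose T := [set t | K (b + t *: d)].
have lbT t : T t -> tb < t.
  move=> Tt; rewrite ltNge; apply/negP => le; apply: ntb.
  have -> : b + tb *: d = (b + t *: d) + (tb - t) *: d.
    by apply/matrixP => i j; rewrite !mxE; ring.
  by apply: (rconeD regK Tt); apply: (rconeZ regK Kd); lra.
have hiT : has_inf T by split; [exists t0 | exists tb => t /lbT /ltW].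
exists (inf T); split => [|t Tt]; last exact: (ge_inf (proj2 hiT) Tt).
apply: (rcone_closed regK) => e e0.
have e' : 0 < e / (enorm d + 1) by rewrite divr_gt0 // ltr_pwDr ?enorm_ge0.
have [t Tt ht] := inf_adherent e' hiT.
exists (b + t *: d) => //.
have tt : 0 <= t - inf T by rewrite subr_ge0 (ge_inf (proj2 hiT) Tt).
have -> : b + inf T *: d - (b + t *: d) = - ((t - inf T) *: d).
  by apply/matrixP => i j; rewrite !mxE; ring.
rewrite enormN enormZ ger0_norm //.
have h2 : (t - inf T) * (enorm d + 1) < e.
  by rewrite -ltr_pdivlMr ?ltr_pwDr ?enorm_ge0 //; lra.
have := enorm_ge0 d; nra.
Qed.

End ConeLine.

Section SmoothLine.
Variables (R : realType) (m : nat) (K : set 'cV[R]_m).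
Hypothesis smK : smooth_cone K.

Let regK := smooth_regular smK.

(* A normal vanishing on [d] would make the midpoint of [p] and [d] a boundary
   point, putting [p] on the ray of [d]. *)
Lemma exit_normal p d : K p -> K d -> p != 0 -> d != 0 ->
  (forall s, 0 < s -> ~ K (p - s *: d)) ->
  exists2 nu, normal_cone K p nu & dot nu d < 0.
Proof.
move=> Kp Kd p0 d0 exit.
have bp : boundary K p.
  apply: (not_interior_boundary Kp) => /(interior_sub_dir d) [s s0].
  exact: exit.
have [[nu Np nu0] _] := smooth_normal_dim_one smK bp p0.
exists nu => //; have /(normal_coneP regK) [_ pnu dp] := Np.
rewrite lt_neqAle pnu // andbT; apply/negP => /eqP dnd.
pose mid := (1/2) *: p + (1 - 1/2) *: d.
have Km : K mid by apply: rcone_convex => //; lra.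
have dm : dot nu mid = 0 by rewrite /mid dotDr !dotZr dp dnd !mulr0 addr0.
have [g [[l l0 el] [l' l'0 el']]] :=
  boundary_mid_ray smK Kp Kd (polar_zero_boundary pnu nu0 Km dm).
have l_neq0 : l != 0 by apply: contraNneq p0 => e; rewrite -el e scale0r.
have l'_neq0 : l' != 0 by apply: contraNneq d0 => e; rewrite -el' e scale0r.
apply: (exit (l / l')); first by rewrite divr_gt0 // lt_neqAle eq_sym ?l_neq0 ?l'_neq0.
by rewrite -el -el' scalerA divfK // subrr; exact: rcone0.
Qed.

End SmoothLine.

Section RankOne.
Variables (R : realType) (m n : nat) (K : set 'cV[R]_m) (A : 'M[R]_(m, n)).
Variable b : 'cV[R]_m.
Hypothesis smK : smooth_cone K.

Let regK := smooth_regular smK.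

Lemma exit_dist_ge p d : K p -> K d -> d != 0 ->
  (forall s, 0 < s -> ~ K (p - s *: d)) ->
  exists2 c, 0 < c & forall s, 0 < s -> c * s <= dist (p - s *: d) K.
Proof.
move=> Kp Kd d0 exit; have [->|p0] := eqVneq p 0.
  have [c c0 hc] := dist_neg_dir_ge regK Kd d0.
  by exists c => // s s0; rewrite sub0r hc.
have [nu /(normal_coneP regK) [_ pnu dp] nud] := exit_normal smK Kp Kd p0 d0 exit.
have nu0 : nu != 0 by apply: contraTneq nud => ->; rewrite dot0l ltxx.
have nn := enorm_gt0 nu0.
exists (- dot nu d / enorm nu); first by rewrite divr_gt0 // oppr_gt0.
move=> s s0; apply: dist_ge (rcone_neq0 regK) _ => y Ky.
have := dot_le_enormM nu (p - s *: d - y); rewrite !dotBr dotZr dp mulrC => cs.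
have := pnu _ Ky; rewrite mulrAC ler_pdivrMr //; nra.
Qed.

(* In rank one, [A x = phi x d] with [phi x = <A^T d, x> / <d, d>]; moving [x]
   along [A^T d] changes [phi] at rate [|A^T d|^2 / <d, d>]. *)
Lemma rank1_dist_feas_le d x t1 : imA A d -> d != 0 -> \rank A = 1%N ->
  K (b + t1 *: d) -> dot (A^T *m d) x / dot d d <= t1 ->
  dist x (feas A b K) <= (t1 - dot (A^T *m d) x / dot d d) * dot d d / enorm (A^T *m d).
Proof.
move=> dA d0 r1 Kt1 le; set g := A^T *m d; set s := t1 - _.
have dd0 : 0 < dot d d by rewrite -enorm_sqr exprn_gt0 // enorm_gt0.
have g0 : g != 0 := imA_trmx_mul_neq0 dA d0.
have gg0 : 0 < dot g g by rewrite -enorm_sqr exprn_gt0 // enorm_gt0.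
have s0 : 0 <= s by rewrite subr_ge0.
pose x' := x + (s * dot d d / dot g g) *: g.
have Sx' : feas A b K x'.
  rewrite /feas /= (rank1_mulmxE dA d0 r1) -/g /x' dotDr dotZr.
  rewrite mulrDl divfK ?gt_eqF // mulfK ?gt_eqF // /s subrKC addrC.
  exact: Kt1.
apply: le_trans (dist_le x Sx') _.
rewrite /x' opprD addNKr enormN enormZ ger0_norm; last by rewrite !divr_ge0 ?mulr_ge0 // ltW.
by rewrite -(enorm_sqr g) expr2 invfM !mulrA mulfVK ?gt_eqF ?enorm_gt0.
Qed.

Lemma rank1_error_bound d : feas A b K !=set0 -> imA A d -> K d -> d != 0 ->
  \rank A = 1%N -> global_error_bound A b K.
Proof.
move=> [x0 Sx0] dA Kd d0 r1; set g := A^T *m d.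
pose phi x := dot g x / dot d d.
have feasE x : feas A b K x = K (b + phi x *: d).
  by rewrite /feas /= (rank1_mulmxE dA d0 r1) addrC.
have dist_self x : feas A b K x -> dist x (feas A b K) = 0.
  move=> Sx; apply/eqP; rewrite eq_le dist_ge0; last by exists x.
  by rewrite andbT -(enorm0 R n) -(subrr x) dist_le.
have Kx0 : K (b + phi x0 *: d) by rewrite -feasE.
have [all_t|[t1 [Kt1 t1min]]] := cone_line_cases regK Kd Kx0.
  exists 1 => // x; rewrite dist_self ?feasE // mul1r dist_ge0 //.
  exact: (rcone_neq0 regK).
have exit s : 0 < s -> ~ K (b + t1 *: d - s *: d).
  move=> s0; rewrite -addrA -scalerBl => /t1min; lra.
have [c c0 hc] := exit_dist_ge Kt1 Kd d0 exit.
have dd0 : 0 < dot d d by rewrite -enorm_sqr exprn_gt0 // enorm_gt0.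
have ng : 0 < enorm g by rewrite enorm_gt0 // imA_trmx_mul_neq0.
have al0 : 0 < dot d d / (enorm g * c) by rewrite divr_gt0 ?mulr_gt0.
exists (dot d d / (enorm g * c)) => // x.
have [le|lt] := lerP t1 (phi x).
  have Sx : feas A b K x.
    rewrite feasE (_ : b + _ = b + t1 *: d + (phi x - t1) *: d); last first.
      by rewrite -addrA -scalerDl [t1 + _]addrC subrK.
    by apply: (rconeD regK Kt1); apply: (rconeZ regK Kd); rewrite subr_ge0.
  by rewrite (dist_self _ Sx) mulr_ge0 ?(ltW al0) ?(dist_ge0 _ (rcone_neq0 regK)).
apply: le_trans (rank1_dist_feas_le dA d0 r1 Kt1 (ltW lt)) _.
have -> : A *m x + b = b + t1 *: d - (t1 - phi x) *: d.
  by rewrite (rank1_mulmxE dA d0 r1) /phi; apply/matrixP => i j; rewrite !mxE; ring.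
apply: le_trans (ler_wpM2l _ (hc _ _)); last by rewrite subr_gt0.
  rewrite -/g /phi [X in _ <= X](_ : _ = (t1 - dot g x / dot d d) * dot d d / enorm g) //.
  by field; rewrite !gt_eqF.
exact: ltW.
Qed.

End RankOne.

Theorem theorem5 (R : realType) (m n : nat) (K : set 'cV[R]_m)
  (A : 'M[R]_(m, n)) (b : 'cV[R]_m) :
  smooth_cone K ->
  feas A b K !=set0 ->
  (exists2 y, (imA A `&` K) y & y != 0) ->
  imA A `&` K `<=` boundary K ->
  [/\ (\rank A != 1%N -> imA A b -> ~ ACQ A b K /\ ~ global_error_bound A b K),
      (\rank A != 1%N -> ~ imA A b -> ACQ A b K /\ ~ global_error_bound A b K) &
      (\rank A = 1%N -> global_error_bound A b K)].
Proof.
move=> smK Sne [d [dA Kd] d0] bd; split.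
- move=> r1 bA; have [w [wA w0 wd]] := imA_orthogonal dA d0 r1.
  split; [exact: (not_ACQ smK bd bA dA Kd d0 wA w0 wd)
         | exact: (no_error_bound smK bd Sne dA Kd d0 wA w0 wd)].
- move=> r1 nb; have [w [wA w0 wd]] := imA_orthogonal dA d0 r1.
  have [h0 slater] := slater_point smK Sne nb dA Kd d0.
  split; [exact: (slater_ACQ (smooth_regular smK) slater)
         | exact: (no_error_bound smK bd Sne dA Kd d0 wA w0 wd)].
- exact (rank1_error_bound smK Sne dA Kd d0).
Qed.
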